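(* Let $n\ge1$ and let $(f_3,\pi_1,\pi_2)$ be a triple where $f_3$ is a pairing of $[n]\cup[\hat n]$, $\pi_1,\pi_2$ are set partitions of $[n]\cup[\hat n]$ with blocks of even size, $\pi_1$ stable by $f_1$ and $f_3$, and $\pi_2$ stable by $f_2$ and $f_3$. Consider the graph whose vertices are the blocks of $\pi_1$ (''white'') and the blocks of $\pi_2$ (''black''), in which: each black block $B$ is joined as a child to the white block containing the maximum hat number of $B$; and each white block $W$ not containing $1$ is joined as a child to the black block containing the maximum non-hat number of $W$. Then this parent/child structure is a tree rooted at the white block containing $1$.
   Context: The ground set is $[n]\cup[\hat n]=\{1,\dots,n,\hat1,\dots,\hat n\}$, with non-hat numbers ordered $1<2<\dots<n$ and hat numbers ordered $\hat1<\hat2<\dots<\hat n$. A pairing is a fixed-point-free involution. $f_1=(1\,\hat n)(2\,\hat1)(3\,\hat2)\cdots(n\,\widehat{n-1})$ and $f_2=(1\,\hat1)(2\,\hat2)\cdots(n\,\hat n)$. A set partition is stable by a permutation $f$ if $f$ maps each block onto itself. *)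

From Stdlib Require Import Relations.
From mathcomp Require Import all_boot.
Set Implicit Arguments. Unset Strict Implicit. Unset Printing Implicit Defensive.

(* Ground set [n] ∪ [hat n]: inl i is the non-hat number i+1,
   inr j is the hat number hat(j+1)  (0-indexed ordinals). *)
Definition X (n : nat) : finType := ('I_n + 'I_n)%type.

(* f1 = (1 hat n)(2 hat1)(3 hat2)...(n hat(n-1)) *)
Definition f1 {n : nat} (x : X n) : X n :=
  match x with
  | inl i => inr (ord_pred i)
  | inr j => inl (ordS j)
  end.

Definition f2 {n : nat} (x : X n) : X n :=
  match x with
  | inl i => inr i
  | inr j => inl j
  end.

Definition pairing {n : nat} (f : X n -> X n) : Prop :=
  forall x, f (f x) = x /\ f x <> x.

Definition set_partition {n : nat} (P : {set {set X n}}) : Prop :=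
  partition P [set: X n].

Definition even_blocks {n : nat} (P : {set {set X n}}) : Prop :=
  forall B, B \in P -> ~~ odd #|B|.

Definition stable_by {n : nat} (f : X n -> X n) (P : {set {set X n}}) : Prop :=
  forall B, B \in P -> f @: B = B.

(* vertices: inl W = white block W of pi1, inr B = black block B of pi2 *)
Definition vertex (n : nat) : Type := ({set X n} + {set X n})%type.

Definition is_vertex {n : nat} (pi1 pi2 : {set {set X n}}) (v : vertex n) : Prop :=
  match v with
  | inl W => W \in pi1
  | inr B => B \in pi2
  end.

(* is_parent c p : p is the parent of c *)
Definition is_parent {n : nat} (hn : 0 < n) (pi1 pi2 : {set {set X n}})
    (c p : vertex n) : Prop :=
  match c, p with
  | inr B, inl W =>
      B \in pi2 /\ W \in pi1 /\
      exists j : 'I_n, inr j \in B /\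
        (forall j' : 'I_n, inr j' \in B -> (j' <= j)%N) /\ inr j \in W
  | inl W, inr B =>
      W \in pi1 /\ (inl (Ordinal hn) : X n) \notin W /\ B \in pi2 /\
      exists i : 'I_n, inl i \in W /\
        (forall i' : 'I_n, inl i' \in W -> (i' <= i)%N) /\ inl i \in B
  | _, _ => False
  end.

Definition rooted_tree {V : Type} (isv : V -> Prop) (par : V -> V -> Prop) (r : V) : Prop :=
  isv r /\
  (forall p, ~ par r p) /\
  (forall v, isv v -> v <> r ->
     exists p, par v p /\ isv p /\ forall p', par v p' -> p' = p) /\
  (forall v, isv v -> clos_refl_trans_1n V par v r).

From Stdlib Require Import Relations.
From mathcomp Require Import all_boot zify.

Set Implicit Arguments.
Unset Strict Implicit.
Unset Printing Implicit Defensive.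

(* Stability by f1 forces every white block to contain a non-hat number, and
   stability by f2 forces every black block to contain a hat number, so every
   vertex other than the root has a unique parent.  Going up two generations
   from a white block W with largest non-hat number i: its parent B contains
   hat(i) (by f2), so the largest hat number j of B is at least i; the
   grandparent contains hat(j), hence j+1 (by f1).  Thus the largest non-hat
   number strictly increases, unless j = n, in which case the grandparent
   contains f1(hat n) = 1 and is the root. *)

Section PartitionOfSetT.
Variables (T : finType) (P : {set {set T}}).
Hypothesis partP : partition P [set: T].

Lemma pblockT_in x : pblock P x \in P.
Proof. by case/and3P: partP => /eqP coverP _ _; rewrite pblock_mem // coverP. Qed.

Lemma mem_pblockT x : x \in pblock P x.
Proof. by case/and3P: partP => /eqP coverP _ _; rewrite mem_pblock coverP. Qed.

Lemma pblockT_eq B x : B \in P -> x \in B -> pblock P x = B.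
Proof. by case/and3P: partP => _ trivP _; apply: def_pblock. Qed.

Lemma partition_block_inhabited B : B \in P -> exists x, x \in B.
Proof.
case/and3P: partP => _ _ P0 BP.
have /set0Pn[x xB] : B != set0 by apply: contraNneq P0 => <-.
by exists x.
Qed.

End PartitionOfSetT.

Lemma stable_by_mem n (f : X n -> X n) (P : {set {set X n}}) B x :
  stable_by f P -> B \in P -> x \in B -> f x \in B.
Proof. by move=> stP BP xB; rewrite -(stP B BP) imset_f. Qed.

Lemma ord_arg_max n (p : pred 'I_n) :
  (exists i, p i) -> exists i, p i /\ forall j, p j -> j <= i.
Proof. by case=> i0 pi0; case: (arg_maxnP val pi0) => i; exists i. Qed.

Section ParentTree.
Variables (n : nat) (hn : 0 < n) (pi1 pi2 : {set {set X n}}).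
Hypotheses (part1 : set_partition pi1) (part2 : set_partition pi2).
Hypotheses (stable1 : stable_by f1 pi1) (stable2 : stable_by f2 pi2).

Let root := pblock pi1 (inl (Ordinal hn)).
Let parent := is_parent hn pi1 pi2.

Lemma white_has_nonhat W : W \in pi1 -> exists i, (inl i : X n) \in W.
Proof.
move=> WP; have [[i|j] xW] := partition_block_inhabited part1 WP; first by exists i.
by exists (ordS j); apply: (stable_by_mem stable1 WP xW).
Qed.

Lemma black_has_hat B : B \in pi2 -> exists j, (inr j : X n) \in B.
Proof.
move=> BP; have [[i|j] xB] := partition_block_inhabited part2 BP; last by exists j.
by exists i; apply: (stable_by_mem stable2 BP xB).
Qed.

Lemma white_parentP W : W \in pi1 -> W <> root ->
  exists i : 'I_n, [/\ (inl i : X n) \in W,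
    forall i' : 'I_n, (inl i' : X n) \in W -> i' <= i &
    forall p, parent (inl W) p <-> p = inr (pblock pi2 (inl i))].
Proof.
move=> WP Wroot.
have oW : (inl (Ordinal hn) : X n) \notin W.
  by apply: contra_notN Wroot => oW; rewrite /root (pblockT_eq part1 WP oW).
have [i [iW imax]] := ord_arg_max (white_has_nonhat WP).
exists i; split=> // -[W'|B] //=; split.
- case=> _ [_ [BP [i' [i'W [i'max i'B]]]]].
  have <- : i' = i by apply/val_inj/eqP; rewrite eqn_leq imax // i'max.
  by rewrite (pblockT_eq part2 BP i'B).
- case=> ->; do 3 split=> //; first exact: pblockT_in part2 (inl i : X n).
  by exists i; do 2 split=> //; exact: mem_pblockT part2 (inl i : X n).
Qed.

Lemma black_parentP B : B \in pi2 ->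
  exists j : 'I_n, [/\ (inr j : X n) \in B,
    forall j' : 'I_n, (inr j' : X n) \in B -> j' <= j &
    forall p, parent (inr B) p <-> p = inl (pblock pi1 (inr j))].
Proof.
move=> BP; have [j [jB jmax]] := ord_arg_max (black_has_hat BP).
exists j; split=> // -[W|B'] //=; split.
- case=> _ [WP [j' [j'B [j'max j'W]]]].
  have <- : j' = j by apply/val_inj/eqP; rewrite eqn_leq jmax // j'max.
  by rewrite (pblockT_eq part1 WP j'W).
- case=> ->; do 2 split=> //; first exact: pblockT_in part1 (inr j : X n).
  by exists j; do 2 split=> //; exact: mem_pblockT part1 (inr j : X n).
Qed.

Lemma root_parentless p : ~ parent (inl root) p.
Proof. by case: p => [W|B] //= [_ [oroot _]]; rewrite mem_pblockT in oroot. Qed.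

Lemma white_reaches_root_gap k W : W \in pi1 ->
  (exists i : 'I_n, (inl i : X n) \in W /\ n - i <= k) ->
  clos_refl_trans_1n _ parent (inl W) (inl root).
Proof.
elim: k W => [|k IHk] W WP [i0 [i0W le_k]]; first by have := ltn_ord i0; lia.
have [->|/eqP Wroot] := eqVneq W root; first exact: rt1n_refl.
have [i [iW imax parW]] := white_parentP WP Wroot.
set B := pblock pi2 (inl i).
have BP : B \in pi2 := pblockT_in part2 (inl i : X n).
have [j [jB jmax parB]] := black_parentP BP.
set W' := pblock pi1 (inr j).
have W'P : W' \in pi1 := pblockT_in part1 (inr j : X n).
apply: Relation_Operators.rt1n_trans ((parW _).2 erefl) _.
apply: Relation_Operators.rt1n_trans ((parB _).2 erefl) _.
have le_ij : i <= j.
  by apply: jmax (stable_by_mem (x := inl i) stable2 BP (mem_pblockT part2 _)).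
have SjW' : (inl (ordS j) : X n) \in W'.
  exact: (stable_by_mem (x := inr j) stable1 W'P (mem_pblockT part1 _)).
have [lt_jn|ge_jn] := ltnP j.+1 n.
- apply: IHk W'P _; exists (ordS j); split=> //=.
  by rewrite modn_small //; have := imax i0 i0W; lia.
- have Sj_first : ordS j = Ordinal hn.
    by apply/val_inj; rewrite /= (_ : j.+1 = n) ?modnn //; have := ltn_ord j; lia.
  by rewrite -/W' -(pblockT_eq part1 W'P SjW') Sj_first; apply: rt1n_refl.
Qed.

Lemma white_reaches_root W : W \in pi1 ->
  clos_refl_trans_1n _ parent (inl W) (inl root).
Proof.
move=> WP; have [i iW] := white_has_nonhat WP.
by apply: (white_reaches_root_gap (k := n)) => //; exists i; rewrite leq_subr.
Qed.

Lemma vertex_parent_unique v : is_vertex pi1 pi2 v -> v <> inl root ->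
  exists p, parent v p /\ is_vertex pi1 pi2 p /\ forall p', parent v p' -> p' = p.
Proof.
case: v => [W|B] /= vP vroot.
- have [|i [_ _ parW]] := white_parentP vP.
    by move=> Wroot; apply: vroot; rewrite Wroot.
  exists (inr (pblock pi2 (inl i))); split; first exact: (parW _).2 erefl.
  by split; [exact: pblockT_in part2 (inl i : X n) | move=> p /parW].
- have [j [_ _ parB]] := black_parentP vP.
  exists (inl (pblock pi1 (inr j))); split; first exact: (parB _).2 erefl.
  by split; [exact: pblockT_in part1 (inr j : X n) | move=> p /parB].
Qed.

Lemma vertex_reaches_root v : is_vertex pi1 pi2 v ->
  clos_refl_trans_1n _ parent v (inl root).
Proof.
case: v => [W|B] /= vP; first exact: white_reaches_root.
have [j [_ _ parB]] := black_parentP vP.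
apply: Relation_Operators.rt1n_trans ((parB _).2 erefl) _.
exact/white_reaches_root/(pblockT_in part1 (inr j : X n)).
Qed.

End ParentTree.

Theorem lemma3 (n : nat) (hn : 0 < n) (f3 : X n -> X n)
    (pi1 pi2 : {set {set X n}}) :
  pairing f3 ->
  set_partition pi1 -> set_partition pi2 ->
  even_blocks pi1 -> even_blocks pi2 ->
  stable_by f1 pi1 -> stable_by f3 pi1 ->
  stable_by f2 pi2 -> stable_by f3 pi2 ->
  rooted_tree (is_vertex pi1 pi2) (is_parent hn pi1 pi2)
    (inl (pblock pi1 (inl (Ordinal hn) : X n))).
Proof.
move=> _ part1 part2 _ _ stable1 _ stable2 _.
split; first exact: pblockT_in.
split; first exact: root_parentless.
split; first exact: vertex_parent_unique.
exact: vertex_reaches_root.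
Qed.
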